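(* For every $P\in\mathbb{R}[X,Y]$ with $P(X,Y)=-P(Y,X)$, one has $\kappa(l_P)=l_Q$ where $Q(X,Y)=P(X,Y)-P(-X-Y,Y)+P(-X-Y,X)$.
   Context: $A=\mathbb{R}\langle x,y\rangle$; $L\subset A$ the free Lie algebra on $x,y$; $\operatorname{ad}_y(l)=[y,l]$. For $P=\sum c_{i,j}X^iY^j$ set $l_P=\sum c_{i,j}[\operatorname{ad}_y^i(x),\operatorname{ad}_y^j(x)]\in L$ (this identifies antisymmetric polynomials, $P(X,Y)=-P(Y,X)$, with the $x$-degree-$2$ part of $L$). $\operatorname{tr}$ is the projection $A\to A/\operatorname{span}\{ab-ba\}$, and $\partial_x:A/\operatorname{span}\{ab-ba\}\to A$ is $\operatorname{tr}(a_1\cdots a_n)\mapsto\sum_{i:\,a_i=x}a_{i+1}\cdots a_n a_1\cdots a_{i-1}$. The operator $\kappa:L\to L$ is $\kappa(l)=\partial_x(\operatorname{tr}(x\,l))$. *)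

From mathcomp Require Import all_boot all_algebra.
From mathcomp Require Import Rstruct.
From mathcomp Require Import mpoly.
Set Implicit Arguments. Unset Strict Implicit. Unset Printing Implicit Defensive.
Import GRing.Theory.
Local Open Scope ring_scope.

Notation RR := Rdefinitions.R.

(* Words in the letters x, y : true = x, false = y. *)
Definition word := seq bool.
Definition lx : bool := true.
Definition ly : bool := false.

(* Elements of A = R<x,y> are represented by formal finite linear combinations
   of words; two representatives denote the same element of A iff they have
   the same coefficient function [coefA]. *)
Definition ncpoly := seq (RR * word).
Definition coefA (a : ncpoly) (w : word) : RR := \sum_(t <- a | t.2 == w) t.1.

Definition addA (a b : ncpoly) : ncpoly := a ++ b.
Definition scaleA (c : RR) (a : ncpoly) : ncpoly := [seq (c * t.1, t.2) | t <- a].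
Definition oppA (a : ncpoly) : ncpoly := scaleA (-1) a.
Definition mulA (a b : ncpoly) : ncpoly :=
  [seq (s.1 * t.1, s.2 ++ t.2) | s <- a, t <- b].
Definition genA (v : bool) : ncpoly := [:: (1, [:: v])].

Definition brA (a b : ncpoly) : ncpoly := addA (mulA a b) (oppA (mulA b a)).
Definition ad_y (a : ncpoly) : ncpoly := brA (genA ly) a.
Definition adyx (i : nat) : ncpoly := iter i ad_y (genA lx).

(* l_P = sum c_{i,j} [ad_y^i x, ad_y^j x], where P = sum c_{i,j} X^i Y^j,
   X = 'X_0, Y = 'X_1 in {mpoly RR[2]}. *)
Definition lP (P : {mpoly RR[2]}) : ncpoly :=
  flatten [seq scaleA P@_m (brA (adyx (m ord0)) (adyx (m ord_max))) | m <- msupp P].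

(* d_x (tr (a_1 ... a_n)) = sum_{i : a_i = x} a_{i+1} ... a_n a_1 ... a_{i-1}
   (0-based positions below), extended linearly. *)
Definition dx_tr_word (w : word) : ncpoly :=
  [seq (1, drop i.+1 w ++ take i w) | i <- [seq i <- iota 0 (size w) | nth ly w i == lx]].
Definition dx_tr (a : ncpoly) : ncpoly :=
  flatten [seq scaleA t.1 (dx_tr_word t.2) | t <- a].

Definition kappa (l : ncpoly) : ncpoly := dx_tr (mulA (genA lx) l).

Definition Xv : {mpoly RR[2]} := 'X_ord0.
Definition Yv : {mpoly RR[2]} := 'X_ord_max.

From Pilot Require Import Defs.
From mathcomp Require Import all_boot all_algebra.
From mathcomp Require Import Rstruct.
From mathcomp Require Import mpoly.
From mathcomp Require Import ring zify.
Set Implicit Arguments. Unset Strict Implicit. Unset Printing Implicit Defensive.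
Import GRing.Theory.
Local Open Scope ring_scope.

(* Every element of A that occurs is a combination of words with exactly two
   x's, y^p x y^q x y^r, and we record such a word as the commutative monomial
   t0^p t1^q t2^r.  Under this encoding [ad_y^i x] placed after the k-th x
   becomes (t_k - t_(k+1))^i, so l_P becomes P(t0-t1, t1-t2) - P(t1-t2, t0-t1),
   and kappa, which cuts tr(x y^p x y^q x y^r) at each of its three x's, becomes
   the sum over the cyclic permutations of (t0, t1, t2).  The theorem is then
   a polynomial identity in t0, t1, t2, which uses the antisymmetry of P. *)

Definition xdeg (w : word) : nat := count id w.

Definition word2x (p q r : nat) : word :=
  nseq p ly ++ lx :: nseq q ly ++ lx :: nseq r ly.

Lemma xdeg_word2x p q r : xdeg (word2x p q r) = 2%N.
Proof. by rewrite /xdeg /word2x !count_cat /= !count_cat /= !count_nseq /= !mul0n. Qed.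

Lemma xdeg0_nseq w : xdeg w = 0%N -> w = nseq (size w) ly.
Proof. by elim: w => [|[] w IH] //= H; rewrite -IH. Qed.

Lemma xdegS_split n w :
  xdeg w = n.+1 -> exists p w', w = nseq p ly ++ lx :: w' /\ xdeg w' = n.
Proof.
elim: w => [|[] w IH] //= H; first by exists 0%N, w; case: H.
by have [p [w' [-> H']]] := IH H; exists p.+1, w'.
Qed.

Lemma xdeg2_word2x w : xdeg w = 2%N -> exists p q r, w = word2x p q r.
Proof.
move=> /xdegS_split [p [w1 [-> /xdegS_split [q [w2 [-> /xdeg0_nseq xdeg_w2]]]]]].
by exists p, q, (size w2); rewrite /word2x -xdeg_w2.
Qed.

Lemma nseq_ly_cons_inj p p' s s' :
  nseq p ly ++ lx :: s = nseq p' ly ++ lx :: s' -> p = p' /\ s = s'.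
Proof. by elim: p p' => [|p IH] [|p'] //= [] // /IH [-> ->]. Qed.

Lemma eq_word2x p q r p' q' r' :
  (word2x p q r == word2x p' q' r') = ((p, q, r) == (p', q', r')).
Proof.
apply/eqP/eqP => [|[-> -> ->] //].
move=> /nseq_ly_cons_inj [-> /nseq_ly_cons_inj [-> E]].
by rewrite -(size_nseq r ly) E size_nseq.
Qed.

Definition xhomog (n : nat) (a : ncpoly) : bool := all (fun t => xdeg t.2 == n) a.

Lemma xhomog_add n a b : xhomog n a -> xhomog n b -> xhomog n (Defs.addA a b).
Proof. by rewrite /xhomog /Defs.addA all_cat => -> ->. Qed.

Lemma xhomog_scale n c a : xhomog n a -> xhomog n (scaleA c a).
Proof. by rewrite /xhomog /scaleA all_map. Qed.

Lemma xhomog_mul m n a b : xhomog m a -> xhomog n b -> xhomog (m + n) (Defs.mulA a b).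
Proof.
move=> /allP Ha /allP Hb; apply/allP => t /allpairsP [[s u] [/Ha /eqP Hs /Hb /eqP Hu ->]].
by rewrite /= /xdeg count_cat -!/(xdeg _) Hs Hu.
Qed.

Lemma xhomog_flatten n (s : seq ncpoly) :
  (forall a, a \in s -> xhomog n a) -> xhomog n (flatten s).
Proof.
move=> Hs; apply/allP => t /flattenP [a /Hs /allP Ha]; exact: Ha.
Qed.

Lemma xhomog_br a b : xhomog 1 a -> xhomog 1 b -> xhomog 2 (brA a b).
Proof.
move=> Ha Hb; apply: xhomog_add; first exact: (xhomog_mul Ha Hb).
exact/xhomog_scale/(xhomog_mul Hb Ha).
Qed.

Lemma xhomog_adyx i : xhomog 1 (adyx i).
Proof.
elim: i => [|i IH] //=; apply: xhomog_add; first exact: (xhomog_mul (m := 0)).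
by apply: xhomog_scale; rewrite -[1%N]addn0; apply: xhomog_mul.
Qed.

Lemma xhomog_lP P : xhomog 2 (lP P).
Proof.
apply: xhomog_flatten => _ /mapP [m _ ->].
exact/xhomog_scale/xhomog_br/xhomog_adyx/xhomog_adyx.
Qed.

Lemma xhomog_dx_tr_word n w : xdeg w = n.+1 -> xhomog n (dx_tr_word w).
Proof.
move=> xdeg_w; rewrite /xhomog /dx_tr_word all_map; apply/allP => i.
rewrite mem_filter mem_iota add0n => /andP [/eqP wi /andP [_ lt_i]] /=.
have E := cat_take_drop i w; rewrite (drop_nth ly lt_i) wi in E.
by move: xdeg_w; rewrite -{1}E /xdeg !count_cat /= => ?; apply/eqP; lia.
Qed.

Lemma xhomog_dx_tr n a : xhomog n.+1 a -> xhomog n (dx_tr a).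
Proof.
move=> /allP Ha; apply: xhomog_flatten => _ /mapP [t /Ha /eqP xdeg_t ->].
exact/xhomog_scale/xhomog_dx_tr_word.
Qed.

Lemma xhomog_kappa l : xhomog 2 l -> xhomog 2 (kappa l).
Proof. by move=> Hl; apply: xhomog_dx_tr; apply: (xhomog_mul (m := 1)). Qed.

Lemma coefA_xhomog_eq0 n a w : xhomog n a -> xdeg w != n -> coefA a w = 0.
Proof.
move=> /allP Ha xdeg_w; rewrite /coefA big_seq_cond big1 // => t /andP [/Ha /eqP xdeg_t /eqP t_w].
by move: xdeg_w; rewrite -t_w xdeg_t eqxx.
Qed.

Section LinearExtension.
Variables (V : lmodType RR) (f : word -> V).

Definition linext (a : ncpoly) : V := \sum_(t <- a) t.1 *: f t.2.

Lemma linext_add a b : linext (Defs.addA a b) = linext a + linext b.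
Proof. exact: big_cat. Qed.

Lemma linext_scale c a : linext (scaleA c a) = c *: linext a.
Proof. by rewrite /linext big_map scaler_sumr; apply: eq_bigr => t _; rewrite scalerA. Qed.

Lemma linext_opp a : linext (oppA a) = - linext a.
Proof. by rewrite linext_scale scaleN1r. Qed.

Lemma linext_flatten (s : seq ncpoly) : linext (flatten s) = \sum_(a <- s) linext a.
Proof. exact: big_flatten. Qed.

End LinearExtension.

(** * Encoding words with two x's by monomials in t0, t1, t2 *)

Notation M3 := {mpoly RR[3]}.

Definition i0 : 'I_3 := @Ordinal 3 0 isT.
Definition i1 : 'I_3 := @Ordinal 3 1 isT.
Definition i2 : 'I_3 := @Ordinal 3 2 isT.

(* [tvar k] is 0 for k >= 3. *)
Definition tvar (k : nat) : M3 := nth 0 [:: 'X_i0; 'X_i1; 'X_i2] k.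

(* The y's of [w] that follow exactly j of its x's are sent to [tvar (k + j)]. *)
Fixpoint ymono (k : nat) (w : word) : M3 :=
  if w is b :: w' then (if b then ymono k.+1 w' else tvar k * ymono k w') else 1.

Lemma ymono_cat k w1 w2 : ymono k (w1 ++ w2) = ymono k w1 * ymono (k + xdeg w1) w2.
Proof.
elim: w1 k => [|[] w1 IH] k /=; first by rewrite mul1r addn0.
  by rewrite IH /xdeg /= addnS.
by rewrite IH mulrA.
Qed.

Lemma ymono_nseq_cat k p w : ymono k (nseq p ly ++ w) = tvar k ^+ p * ymono k w.
Proof. by elim: p => [|p IH] /=; rewrite ?mul1r // IH exprS mulrA. Qed.

Definition tmono (p q r : nat) : M3 := tvar 0 ^+ p * tvar 1 ^+ q * tvar 2 ^+ r.

Lemma ymono_word2x p q r : ymono 0 (word2x p q r) = tmono p q r.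
Proof.
rewrite /word2x ymono_nseq_cat /= (ymono_nseq_cat 1) /= -[nseq r ly]cats0.
by rewrite (ymono_nseq_cat 2) /= mulr1 mulrA.
Qed.

Definition mnm3 (p q r : nat) : 'X_{1..3} := (U_(i0) *+ p + U_(i1) *+ q + U_(i2) *+ r)%MM.

Lemma tmonoE p q r : tmono p q r = 'X_[mnm3 p q r].
Proof. by rewrite /tmono /mnm3 !mpolyXD !mpolyXn. Qed.

Lemma eq_mnm3 p q r p' q' r' : (mnm3 p q r == mnm3 p' q' r') = ((p, q, r) == (p', q', r')).
Proof.
apply/eqP/eqP => [E|[-> -> ->] //].
have := congr1 (fun m : 'X_{1..3} => (m i0, m i1, m i2)) E.
by rewrite /= !mnmDE !mulmnE !mnm1E /= !mul0n !mul1n !addn0 !add0n.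
Qed.

Definition enc_word (w : word) : M3 := if xdeg w == 2%N then ymono 0 w else 0.

Lemma enc_word2x p q r : enc_word (word2x p q r) = tmono p q r.
Proof. by rewrite /enc_word xdeg_word2x ymono_word2x. Qed.

Lemma coef_enc_word w p q r : (enc_word w)@_(mnm3 p q r) = (w == word2x p q r)%:R.
Proof.
have [/xdeg2_word2x [p' [q' [r' ->]]]|xdeg_w] := eqVneq (xdeg w) 2%N.
  by rewrite enc_word2x tmonoE mcoeffX eq_mnm3 eq_word2x.
rewrite /enc_word (negbTE xdeg_w) mcoeff0.
by case: eqP => // w_eq; rewrite w_eq xdeg_word2x eqxx in xdeg_w.
Qed.

Lemma coefA_word2x a p q r : coefA a (word2x p q r) = (linext enc_word a)@_(mnm3 p q r).
Proof.
rewrite /coefA /linext raddf_sum big_mkcond /=; apply: eq_bigr => t _.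
by rewrite mcoeffZ coef_enc_word; case: eqP; rewrite ?mulr1 ?mulr0.
Qed.

Lemma enc_word_mul a b : xhomog 1 a -> xhomog 1 b ->
  linext enc_word (Defs.mulA a b) = linext (ymono 0) a * linext (ymono 1) b.
Proof.
move=> /allP Ha /allP Hb.
rewrite /linext /Defs.mulA big_allpairs_dep /= mulr_suml big_seq [RHS]big_seq.
apply: eq_bigr => s /Ha /eqP xdeg_s.
rewrite mulr_sumr big_seq [RHS]big_seq; apply: eq_bigr => t /Hb /eqP xdeg_t /=.
rewrite /enc_word /xdeg count_cat -!/(xdeg _) xdeg_s xdeg_t /= ymono_cat xdeg_s.
by rewrite -scalerAl -scalerAr scalerA.
Qed.

Lemma ymono_mul_yl k a : linext (ymono k) (Defs.mulA (genA ly) a) = tvar k * linext (ymono k) a.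
Proof.
rewrite /linext /Defs.mulA big_allpairs_dep /= big_cons big_nil addr0 mulr_sumr.
by apply: eq_bigr => t _ /=; rewrite mul1r scalerAr.
Qed.

Lemma ymono_mul_yr k a : xhomog 1 a ->
  linext (ymono k) (Defs.mulA a (genA ly)) = linext (ymono k) a * tvar k.+1.
Proof.
move=> /allP Ha.
rewrite /linext /Defs.mulA big_allpairs_dep /= mulr_suml big_seq [RHS]big_seq.
apply: eq_bigr => t /Ha /eqP xdeg_t /=.
by rewrite big_cons big_nil addr0 /= mulr1 ymono_cat xdeg_t addn1 /= mulr1 scalerAl.
Qed.

Lemma ymono_adyx k i : linext (ymono k) (adyx i) = (tvar k - tvar k.+1) ^+ i.
Proof.
elim: i => [|i IH]; first by rewrite /linext big_seq1 scale1r.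
rewrite /adyx iterS -/(adyx i) /ad_y /brA linext_add linext_opp.
by rewrite ymono_mul_yl ymono_mul_yr ?xhomog_adyx // IH exprS mulrBl [_ * tvar _]mulrC.
Qed.

Lemma comp_mpoly2 k (P : {mpoly RR[2]}) (a b : {mpoly RR[k]}) :
  P \mPo [tuple a; b] = \sum_(m <- msupp P) P@_m *: (a ^+ m ord0 * b ^+ m ord_max).
Proof.
rewrite comp_mpolyE; apply: eq_bigr => m _; congr (_ *: _).
rewrite big_ord_recr big_ord_recr big_ord0 /= mul1r.
by congr (_ ^+ m _ * _); apply: val_inj.
Qed.

Definition d01 : M3 := tvar 0 - tvar 1.
Definition d12 : M3 := tvar 1 - tvar 2.

Definition lpoly (P : {mpoly RR[2]}) : M3 :=
  (P \mPo [tuple d01; d12]) - (P \mPo [tuple d12; d01]).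

Lemma enc_lP P : linext enc_word (lP P) = lpoly P.
Proof.
rewrite /lP linext_flatten big_map /lpoly !comp_mpoly2 -sumrB.
apply: eq_bigr => m _; rewrite linext_scale /brA linext_add linext_opp.
by rewrite !enc_word_mul ?xhomog_adyx // !ymono_adyx scalerBr [d12 ^+ _ * _]mulrC.
Qed.

Definition xpos (w : word) : seq nat := [seq i <- iota 0 (size w) | nth ly w i == lx].

Lemma xpos_cons b w : xpos (b :: w) = (if b then [:: 0%N] else [::]) ++ map S (xpos w).
Proof.
rewrite /xpos /= -[1%N]/(1 + 0)%N iotaDl filter_map.
by rewrite (@eq_filter _ _ (fun i => nth ly w i == lx)) //; case: b.
Qed.

Lemma xpos_nseq_cat p w : xpos (nseq p ly ++ w) = map (addn p) (xpos w).
Proof.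
elim: p => [|p IH]; first by rewrite map_id_in.
by rewrite /= xpos_cons IH -map_comp; apply: eq_map => i /=; rewrite addSn.
Qed.

Lemma xpos_x_word2x p q r : xpos (lx :: word2x p q r) = [:: 0%N; p.+1; (p + q).+2].
Proof.
rewrite /word2x -[nseq r ly]cats0.
rewrite xpos_cons xpos_nseq_cat xpos_cons xpos_nseq_cat xpos_cons xpos_nseq_cat /=.
by congr [:: _; _; _]; lia.
Qed.

Lemma rot_cat_cons (T : Type) n (s t : seq T) x : size s = n ->
  drop n.+1 (s ++ x :: t) ++ x :: take n (s ++ x :: t) = t ++ x :: s.
Proof.
by move=> <-; rewrite drop_cat take_cat ltnn ltnNge leqnSn subSnn subnn /= drop0 cats0.
Qed.

Lemma dx_tr_word_x_word2x p q r : dx_tr_word (lx :: word2x p q r) =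
  [:: (1, word2x p q r); (1, word2x q r p); (1, word2x r p q)].
Proof.
rewrite /dx_tr_word -/(xpos _) xpos_x_word2x /= drop0 cats0.
have pq_size : size (nseq p ly ++ lx :: nseq q ly) = (p + q).+1.
  by rewrite size_cat /= !size_nseq addnS.
have -> : word2x p q r = (nseq p ly ++ lx :: nseq q ly) ++ lx :: nseq r ly.
  by rewrite /word2x -catA.
rewrite -catA (rot_cat_cons _ _ (size_nseq p ly)) catA (rot_cat_cons _ _ pq_size).
by rewrite /word2x -!catA.
Qed.

Definition rot1 : 3.-tuple M3 := [tuple tvar 2; tvar 0; tvar 1].
Definition rot2 : 3.-tuple M3 := [tuple tvar 1; tvar 2; tvar 0].

Definition cycsum (G : M3) : M3 := G + (G \mPo rot1) + (G \mPo rot2).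

Lemma tmono_rot1 p q r : tmono p q r \mPo rot1 = tmono q r p.
Proof. rewrite /tmono !rmorphM !rmorphXn /= !comp_mpolyXU /=; ring. Qed.

Lemma tmono_rot2 p q r : tmono p q r \mPo rot2 = tmono r p q.
Proof. rewrite /tmono !rmorphM !rmorphXn /= !comp_mpolyXU /=; ring. Qed.

Lemma cycsum_linext (f : word -> M3) a : cycsum (linext f a) = linext (cycsum \o f) a.
Proof.
rewrite /cycsum /linext !raddf_sum -!big_split /=; apply: eq_bigr => t _.
by rewrite !comp_mpolyZ !scalerDr.
Qed.

Lemma enc_kappa l : xhomog 2 l -> linext enc_word (kappa l) = cycsum (linext enc_word l).
Proof.
move=> /allP Hl.
rewrite /kappa /dx_tr /Defs.mulA /= cats0 linext_flatten !big_map cycsum_linext.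
rewrite /linext big_seq [RHS]big_seq; apply: eq_bigr => t /Hl /eqP /xdeg2_word2x [p [q [r ->]]].
rewrite -/(linext _ _) linext_scale mul1r dx_tr_word_x_word2x /linext !big_cons big_nil /=.
by rewrite !scale1r addr0 !enc_word2x /cycsum tmono_rot1 tmono_rot2 addrA.
Qed.

Lemma comp_mpoly2_comp k j (P : {mpoly RR[2]}) (a b : {mpoly RR[k]})
    (c : k.-tuple {mpoly RR[j]}) :
  (P \mPo [tuple a; b]) \mPo c = P \mPo [tuple a \mPo c; b \mPo c].
Proof.
rewrite !comp_mpoly2 raddf_sum; apply: eq_bigr => m _.
by rewrite /= comp_mpolyZ rmorphM !rmorphXn.
Qed.

Lemma comp_Xv k (a b : {mpoly RR[k]}) : Xv \mPo [tuple a; b] = a.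
Proof. exact: comp_mpolyXU. Qed.

Lemma comp_Yv k (a b : {mpoly RR[k]}) : Yv \mPo [tuple a; b] = b.
Proof. exact: comp_mpolyXU. Qed.

Lemma comp_mpoly_antisym k (P : {mpoly RR[2]}) (a b : {mpoly RR[k]}) :
  P \mPo [tuple Yv; Xv] = - P -> P \mPo [tuple b; a] = - (P \mPo [tuple a; b]).
Proof. by move=> P_anti; rewrite -comp_mpolyN -P_anti comp_mpoly2_comp comp_Xv comp_Yv. Qed.

Lemma cycsum_lpoly (P : {mpoly RR[2]}) : P \mPo [tuple Yv; Xv] = - P ->
  cycsum (lpoly P) =
  lpoly (P - (P \mPo [tuple - Xv - Yv; Yv]) + (P \mPo [tuple - Xv - Yv; Xv])).
Proof.
move=> /comp_mpoly_antisym anti.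
pose d20 : M3 := tvar 2 - tvar 0.
have d01_rot1 : d01 \mPo rot1 = d20 by rewrite rmorphB /= !comp_mpolyXU.
have d12_rot1 : d12 \mPo rot1 = d01 by rewrite rmorphB /= !comp_mpolyXU.
have d01_rot2 : d01 \mPo rot2 = d12 by rewrite rmorphB /= !comp_mpolyXU.
have d12_rot2 : d12 \mPo rot2 = d20 by rewrite rmorphB /= !comp_mpolyXU.
have d01_d12 : - d01 - d12 = d20 by rewrite /d20 /d01 /d12; ring.
have d12_d01 : - d12 - d01 = d20 by rewrite /d20 /d01 /d12; ring.
rewrite /cycsum /lpoly !rmorphB /= !comp_mpoly2_comp d01_rot1 d12_rot1 d01_rot2 d12_rot2.
rewrite !comp_mpolyD ?comp_mpolyB ?comp_mpolyN !comp_mpoly2_comp.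
rewrite ?comp_mpolyB ?comp_mpolyD ?comp_mpolyN !comp_Xv !comp_Yv d01_d12 d12_d01.
rewrite (anti _ d01 d12) (anti _ d20 d01) (anti _ d12 d20).
ring.
Qed.

Theorem mainTheorem17 (P : {mpoly RR[2]}) :
  (P \mPo [tuple Yv; Xv]) = - P ->
  forall w : word,
    coefA (kappa (lP P)) w =
    coefA (lP (P - (P \mPo [tuple - Xv - Yv; Yv]) + (P \mPo [tuple - Xv - Yv; Xv]))) w.
Proof.
move=> P_anti w; have [/xdeg2_word2x [p [q [r ->]]]|xdeg_w] := eqVneq (xdeg w) 2%N.
  by rewrite !coefA_word2x enc_kappa ?xhomog_lP // !enc_lP cycsum_lpoly.
by rewrite !(coefA_xhomog_eq0 _ xdeg_w) ?xhomog_kappa ?xhomog_lP.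
Qed.
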